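(* For an integer $k\ge1$ and a structure function $s$ (as defined in the context) of a unit vector with at most $k$ nonzero entries, define $$ A(s) := \max_{1\le p \le k} p\, s^2(p),\qquad B(s) := \min_{1\le p \le k} \max\{p^2s^2(p),\ k\, s(p)\}. $$ Then: (i) for every such structure function $s$, $A(s)\le B(s)$; (ii) there exists a sequence of unit vectors $\mathbf{v}^{(k)}$, $k=1,2,\dots$, with $\mathbf{v}^{(k)}$ having at most $k$ nonzero entries and structure function $s_k$, such that $\lim_{k\to\infty} B(s_k)/A(s_k)=\infty$.
   Context: For a unit vector $\mathbf{v}\in\mathbb{R}^n$ with at most $k$ nonzero entries, let $v_{(1)}\ge v_{(2)}\ge\cdots$ be the absolute values of its entries sorted in decreasing order, and define its signal-energy structure function $s(p)=\big(\sum_{i=1}^p v_{(i)}^2\big)^{-1}$ for $1\le p\le k$. *)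

From HB Require Import structures.
From mathcomp Require Import all_boot all_order all_algebra.
From mathcomp Require Import all_classical all_reals all_analysis.
Set Implicit Arguments. Unset Strict Implicit. Unset Printing Implicit Defensive.
Import Order.TTheory GRing.Theory Num.Theory.
Local Open Scope ring_scope.

Section Defs.
Variable R : realType.

Definition unit_vec (n : nat) (v : 'I_n -> R) : Prop :=
  \sum_(i < n) v i ^+ 2 = 1.

Definition sparse (k n : nat) (v : 'I_n -> R) : Prop :=
  let supp := [pred i | v i != 0] in (#|supp| <= k)%N.

(* absolute values of the entries sorted in decreasing order:
   v_(1) = nth 0 (sorted_abs v) 0, v_(2) = nth 0 (sorted_abs v) 1, ... *)
Definition sorted_abs (n : nat) (v : 'I_n -> R) : seq R :=
  sort (fun x y : R => y <= x) [seq `|v i| | i <- enum 'I_n].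

Definition strfun (n : nat) (v : 'I_n -> R) (p : nat) : R :=
  (\sum_(i < p) (nth (0:R) (sorted_abs v) i) ^+ 2)^-1.

Definition Aval (k : nat) (s : nat -> R) : R :=
  \big[Num.max/ 1%:R * s 1%N ^+ 2]_(1 <= p < k.+1) (p%:R * s p ^+ 2).

Definition Bval (k : nat) (s : nat -> R) : R :=
  \big[Num.min/ Num.max (1%:R ^+ 2 * s 1%N ^+ 2) (k%:R * s 1%N)]_(1 <= p < k.+1)
     Num.max (p%:R ^+ 2 * s p ^+ 2) (k%:R * s p).

End Defs.

From HB Require Import structures.
From mathcomp Require Import all_boot all_order all_algebra.
From mathcomp Require Import all_classical all_reals all_analysis.
Import Order.TTheory Order.NatMonotonyTheory GRing.Theory Num.Theory.
Local Open Scope classical_set_scope.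
Local Open Scope ring_scope.
Set Implicit Arguments. Unset Strict Implicit.

(* Let E(p) = 1/s(p) be the energy of the p largest entries. As the entries
   are sorted decreasingly, E(p)/p is nonincreasing in p, and a unit k-sparse
   vector has E(k) = 1, so p s(p) <= k for p <= k. Now let p, q <= k: if q <= p
   then s(p) <= s(q), whence p s(p)^2 <= k s(p) <= k s(q); if p <= q then
   p s(p) <= q s(q), whence p s(p)^2 <= (p s(p))^2 <= (q s(q))^2. So A <= B.
   For (ii) take the vector of R^k with squared entries
   (sqrt(i+1) - sqrt i)/sqrt k: they decrease and telescope to E(p) = sqrt(p/k),
   so p s(p)^2 = k for all p and A = k, while max(p^2 s(p)^2, k s(p)) =
   max(p k, k sqrt(k/p)) >= M k as soon as M^3 < k. *)

Section CumulativeEnergy.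
Variables (R : realType) (n : nat) (v : 'I_n -> R).

Local Notation vsort := (nth 0 (sorted_abs v)).

Definition energy (p : nat) : R := \sum_(i < p) vsort i ^+ 2.

Lemma strfunE p : strfun v p = (energy p)^-1.
Proof. by []. Qed.

Lemma perm_sorted_abs : perm_eq (sorted_abs v) [seq `|v i| | i <- enum 'I_n].
Proof. by rewrite perm_sort. Qed.

Lemma size_sorted_abs : size (sorted_abs v) = n.
Proof. by rewrite (perm_size perm_sorted_abs) size_map size_enum_ord. Qed.

Lemma nth_sorted_abs_ge0 i : 0 <= vsort i.
Proof.
have [lti|] := ltnP i (size (sorted_abs v)); last by move=> ?; rewrite nth_default.
have : vsort i \in [seq `|v i| | i <- enum 'I_n].
  by rewrite -(perm_mem perm_sorted_abs) mem_nth.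
by case/mapP => j _ ->.
Qed.

Lemma nth_sorted_abs_nonincr i j : (i <= j)%N -> vsort j <= vsort i.
Proof.
move=> le_ij; have [ltj|gej] := ltnP j (size (sorted_abs v)); last first.
  by rewrite nth_default ?nth_sorted_abs_ge0.
have ge_trans : transitive (fun x y : R => y <= x).
  by move=> x y z /= le_xy le_yz; exact: le_trans le_yz le_xy.
have sorted_v : sorted (fun x y : R => y <= x) (sorted_abs v).
  by apply: sort_sorted => x y; exact: le_total.
apply: (sorted_leq_nth ge_trans _ 0 sorted_v) => //; rewrite inE //.
exact: leq_ltn_trans le_ij ltj.
Qed.

Lemma energyS p : energy p.+1 = energy p + vsort p ^+ 2.
Proof. by rewrite /energy big_ord_recr. Qed.

Lemma energy_ge0 p : 0 <= energy p.
Proof. by apply: sumr_ge0 => i _; exact: sqr_ge0. Qed.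

Lemma energy_nondecr p q : (p <= q)%N -> energy p <= energy q.
Proof.
apply: nondecnP => {}p; rewrite energyS lerDl; exact: sqr_ge0.
Qed.

Lemma sq_nth_sorted_abs_nonincr i j : (i <= j)%N -> vsort j ^+ 2 <= vsort i ^+ 2.
Proof.
by move=> le_ij; rewrite ler_sqr ?nnegrE ?nth_sorted_abs_ge0 ?nth_sorted_abs_nonincr.
Qed.

Lemma mul_sq_nth_le_energy p : p%:R * vsort p ^+ 2 <= energy p.
Proof.
rewrite mulr_natl -[p in _ *+ p]card_ord -sumr_const.
by apply: ler_sum => i _; apply/sq_nth_sorted_abs_nonincr/ltnW.
Qed.

Lemma energy_concave p q : (p <= q)%N -> p%:R * energy q <= q%:R * energy p.
Proof.
elim: q => [|q IHq]; first by rewrite leqn0 => /eqP ->.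
rewrite leq_eqVlt => /orP [/eqP -> //| /[!ltnS] le_pq].
have step : q%:R * energy q.+1 <= q.+1%:R * energy q.
  by rewrite energyS mulrDr -natr1 mulrDl mul1r lerD2l mul_sq_nth_le_energy.
have [q0|q_gt0] := posnP q.
  by move: le_pq; rewrite q0 leqn0 => /eqP ->; rewrite mul0r mulr_ge0 ?energy_ge0.
have q_pos : 0 < q%:R :> R by rewrite ltr0n.
rewrite -(ler_pM2l q_pos); apply: (@le_trans _ _ (p%:R * (q.+1%:R * energy q))).
  by rewrite mulrCA ler_wpM2l.
by rewrite [p%:R * _]mulrCA [q%:R * _]mulrCA ler_wpM2l ?IHq.
Qed.

Lemma count_sorted_abs_neq0 :
  count (fun x : R => x != 0) (sorted_abs v) = #|[pred i | v i != 0]|.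
Proof.
rewrite (permP perm_sorted_abs) count_map cardE -size_filter enumT /enum_mem.
by congr size; apply: eq_filter => i /=; rewrite normr_eq0.
Qed.

Lemma nth_sorted_abs_sparse k j : sparse k v -> (k <= j)%N -> vsort j = 0.
Proof.
rewrite /sparse /= -count_sorted_abs_neq0 => sp le_kj.
have [ltj|] := ltnP j (size (sorted_abs v)); last by move=> ?; rewrite nth_default.
apply/eqP; apply: contraTT sp; rewrite -ltnNge => vj_neq0.
have head_neq0 : all (fun x : R => x != 0) (take j.+1 (sorted_abs v)).
  apply/(all_nthP 0) => i; rewrite size_takel // => lt_ij; rewrite nth_take //.
  apply/lt0r_neq0/(lt_le_trans _ (nth_sorted_abs_nonincr (ltnSE lt_ij))).
  by rewrite lt_def vj_neq0 nth_sorted_abs_ge0.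
rewrite -(cat_take_drop j.+1 (sorted_abs v)) count_cat.
move: head_neq0; rewrite all_count => /eqP ->; rewrite size_takel //.
exact: leq_trans (leq_addr _ _).
Qed.

Lemma energy_sparse k m : sparse k v -> (k <= m)%N -> energy m = energy k.
Proof.
move=> sp le_km; rewrite /energy -!(big_mkord xpredT (fun i => vsort i ^+ 2)).
rewrite (big_cat_nat _ le_km) //= [X in _ + X]big_nat_cond [X in _ + X]big1 ?addr0 //.
move=> i /andP [/andP [le_ki _] _].
by rewrite (nth_sorted_abs_sparse sp le_ki) expr0n.
Qed.

Lemma energy_total : energy n = \sum_(i < n) v i ^+ 2.
Proof.
rewrite /energy -(big_mkord xpredT (fun i => vsort i ^+ 2)).
rewrite -[n in index_iota _ n]size_sorted_abs.
rewrite -(big_nth 0 xpredT (fun x : R => x ^+ 2)) (perm_big _ perm_sorted_abs) /=.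
by rewrite big_map big_enum; apply: eq_bigr => i _; rewrite real_normK ?num_real.
Qed.

Lemma sparse_dim : sparse n v.
Proof. by rewrite /sparse (leq_trans (max_card _)) ?card_ord. Qed.

Lemma energy_sparse_unit k : unit_vec v -> sparse k v -> energy k = 1.
Proof.
move=> unit sp; rewrite -unit -energy_total.
by rewrite -(energy_sparse sp (leq_maxl k n)) (energy_sparse sparse_dim (leq_maxr k n)).
Qed.

End CumulativeEnergy.

Section MaxMinBounds.
Variables (R : realType) (k : nat) (s : nat -> R).
Hypothesis k_gt0 : (0 < k)%N.

Lemma Aval_le c :
  (forall p, (1 <= p <= k)%N -> p%:R * s p ^+ 2 <= c) -> Aval k s <= c.
Proof.
move=> le_c; rewrite /Aval big_seq.
apply: (big_ind (fun y => y <= c)); first by rewrite le_c ?k_gt0.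
- by move=> x y le_xc le_yc; rewrite ge_max le_xc le_yc.
- by move=> p; rewrite mem_index_iota ltnS; exact: le_c.
Qed.

Lemma Aval_const c :
  (forall p, (1 <= p <= k)%N -> p%:R * s p ^+ 2 = c) -> Aval k s = c.
Proof.
move=> eq_c; rewrite /Aval big_seq.
apply: (big_ind (fun y => y = c)); first by rewrite eq_c ?k_gt0.
- by move=> x y -> ->; rewrite maxxx.
- by move=> p; rewrite mem_index_iota ltnS; exact: eq_c.
Qed.

Lemma Bval_ge c :
  (forall p, (1 <= p <= k)%N -> c <= Num.max (p%:R ^+ 2 * s p ^+ 2) (k%:R * s p)) ->
  c <= Bval k s.
Proof.
move=> ge_c; rewrite /Bval big_seq.
apply: (big_ind (fun y => c <= y)); first by rewrite ge_c ?k_gt0.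
- by move=> x y le_cx le_cy; rewrite le_min le_cx le_cy.
- by move=> p; rewrite mem_index_iota ltnS; exact: ge_c.
Qed.

End MaxMinBounds.

Lemma mul_sq_le_max (R : realFieldType) (k p q : nat) (x y : R) :
  (1 <= p)%N -> 0 < x -> 0 < y -> p%:R * x <= k%:R ->
  ((q <= p)%N -> x <= y) -> ((p <= q)%N -> p%:R * x <= q%:R * y) ->
  p%:R * x ^+ 2 <= Num.max (q%:R ^+ 2 * y ^+ 2) (k%:R * y).
Proof.
move=> p_gt0 x_gt0 y_gt0 px_le_k le_xy le_pxqy; rewrite le_max.
have [le_qp|/ltnW le_pq] := leqP q p; apply/orP; [right|left].
  rewrite expr2 mulrA (le_trans (ler_wpM2r (ltW x_gt0) px_le_k)) //.
  by rewrite ler_wpM2l ?le_xy.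
have p_ge1 : 1 <= p%:R :> R by rewrite ler1n.
apply: (@le_trans _ _ ((p%:R * x) ^+ 2)).
  by rewrite exprMn ler_wpM2r ?sqr_ge0 // expr2 ler_peMl.
rewrite -exprMn ler_sqr ?le_pxqy // nnegrE mulr_ge0 ?ltW // ltr0n //.
exact: leq_trans p_gt0 le_pq.
Qed.

Lemma Aval_le_Bval (R : realType) (k n : nat) (v : 'I_n -> R) :
  (1 <= k)%N -> unit_vec v -> sparse k v -> Aval k (strfun v) <= Bval k (strfun v).
Proof.
move=> k_gt0 unit sp.
have p_le_kE p : (p <= k)%N -> p%:R <= k%:R * energy v p.
  by move=> /(energy_concave v); rewrite (energy_sparse_unit unit sp) mulr1.
have E_gt0 p : (1 <= p <= k)%N -> 0 < energy v p.
  case/andP => p_gt0 /p_le_kE; rewrite lt_def energy_ge0 andbT.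
  by apply: contraTneq => ->; rewrite mulr0 -ltNge ltr0n.
apply: Aval_le => // p p_range; apply: Bval_ge => // q q_range.
have [Ep_gt0 Eq_gt0] := (E_gt0 p p_range, E_gt0 q q_range).
apply: mul_sq_le_max; rewrite ?strfunE ?invr_gt0 //.
- by case/andP: p_range.
- by rewrite ler_pdivrMr // p_le_kE //; case/andP: p_range.
- by move=> le_qp; rewrite lef_pV2 ?posrE // energy_nondecr.
- move=> le_pq; rewrite ler_pdivrMr // mulrAC ler_pdivlMr //.
  exact: energy_concave.
Qed.

Section SqrtProfile.
Variable R : realType.

Local Notation sqrtn m := (Num.sqrt (m%:R : R)).

Definition sqrt_profile (k i : nat) : R := Num.sqrt ((sqrtn i.+1 - sqrtn i) / sqrtn k).

Definition sqrt_profile_vec (k : nat) : 'I_k -> R := fun i => sqrt_profile k i.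
Arguments sqrt_profile_vec : clear implicits.

Lemma sqrtn_gt0 m : (0 < m)%N -> 0 < sqrtn m.
Proof. by move=> m_gt0; rewrite sqrtr_gt0 ltr0n. Qed.

Lemma sqrtn_succ_subE m : sqrtn m.+1 - sqrtn m = (sqrtn m.+1 + sqrtn m)^-1.
Proof.
have sum_gt0 : 0 < sqrtn m.+1 + sqrtn m by rewrite ltr_pwDl ?sqrtn_gt0 ?sqrtr_ge0.
apply: (mulIf (lt0r_neq0 sum_gt0)); rewrite mulVf ?lt0r_neq0 // -subr_sqr.
by rewrite !sqr_sqrtr // -natr1 addrAC subrr add0r.
Qed.

Lemma sqrtn_succ_sub_ge0 m : 0 <= sqrtn m.+1 - sqrtn m.
Proof. by rewrite subr_ge0 ler_sqrt ?ler_nat. Qed.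

Lemma sqrtn_succ_sub_nonincr i j :
  (i <= j)%N -> sqrtn j.+1 - sqrtn j <= sqrtn i.+1 - sqrtn i.
Proof.
apply: (nonincnP (f := fun m => sqrtn m.+1 - sqrtn m)) => m.
rewrite !sqrtn_succ_subE lef_pV2 ?posrE ?ltr_pwDl ?sqrtn_gt0 ?sqrtr_ge0 //.
by rewrite lerD ?ler_sqrt ?ler_nat.
Qed.

Lemma sqrt_profile_sq k i : sqrt_profile k i ^+ 2 = (sqrtn i.+1 - sqrtn i) / sqrtn k.
Proof. by rewrite sqr_sqrtr // divr_ge0 ?sqrtn_succ_sub_ge0 ?sqrtr_ge0. Qed.

Lemma sum_sqrt_profile_sq k p : \sum_(i < p) sqrt_profile k i ^+ 2 = sqrtn p / sqrtn k.
Proof.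
under eq_bigr => i _ do rewrite sqrt_profile_sq.
rewrite -mulr_suml -(big_mkord xpredT (fun i => sqrtn i.+1 - sqrtn i)).
by rewrite telescope_sumr // sqrtr0 subr0.
Qed.

Lemma sorted_abs_sqrt_profile k :
  sorted_abs (sqrt_profile_vec k) = map (sqrt_profile k) (iota 0 k).
Proof.
rewrite /sorted_abs.
have -> : [seq `|sqrt_profile_vec k i| | i <- enum 'I_k] = map (sqrt_profile k) (iota 0 k).
  rewrite -val_enum_ord -map_comp; apply: eq_map => i /=.
  by rewrite ger0_norm ?sqrtr_ge0.
rewrite sorted_sort //; first by move=> x y z /= le_yx le_zy; exact: le_trans le_zy le_yx.
apply: homo_sorted (iota_sorted 0 k) => i j /= le_ij.
rewrite ler_sqrt ?divr_ge0 ?sqrtn_succ_sub_ge0 ?sqrtr_ge0 //.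
by rewrite ler_wpM2r ?invr_ge0 ?sqrtr_ge0 ?sqrtn_succ_sub_nonincr.
Qed.

Lemma energy_sqrt_profile k p : (p <= k)%N -> energy (sqrt_profile_vec k) p = sqrtn p / sqrtn k.
Proof.
move=> le_pk; rewrite /energy sorted_abs_sqrt_profile -sum_sqrt_profile_sq.
apply: eq_bigr => i _; have lt_ik : (i < k)%N := leq_trans (ltn_ord i) le_pk.
by rewrite (nth_map 0%N) ?nth_iota ?size_iota.
Qed.

Lemma strfun_sqrt_profile k p :
  (1 <= p <= k)%N -> strfun (sqrt_profile_vec k) p = sqrtn k / sqrtn p.
Proof. by case/andP => _ le_pk; rewrite strfunE energy_sqrt_profile // invf_div. Qed.

Lemma sq_sqrtn_div k p : (sqrtn k / sqrtn p) ^+ 2 = k%:R / p%:R.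
Proof. by rewrite expr_div_n !sqr_sqrtr. Qed.

Lemma Aval_sqrt_profile k : (0 < k)%N -> Aval k (strfun (sqrt_profile_vec k)) = k%:R.
Proof.
move=> k_gt0; apply: Aval_const => // p p_range.
rewrite strfun_sqrt_profile // sq_sqrtn_div mulrCA mulfV ?mulr1 //.
by rewrite pnatr_eq0 -lt0n; case/andP: p_range.
Qed.

Lemma Bval_sqrt_profile_ge k (M : R) : (0 < k)%N -> 1 <= M -> M ^+ 3 < k%:R ->
  M * k%:R <= Bval k (strfun (sqrt_profile_vec k)).
Proof.
move=> k_gt0 M_ge1 M3_lt_k; apply: Bval_ge => // p p_range.
have /andP [p_gt0 _] := p_range.
have M_ge0 : 0 <= M := le_trans ler01 M_ge1.
have p_pos : 0 < p%:R :> R by rewrite ltr0n.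
rewrite strfun_sqrt_profile // le_max sq_sqrtn_div; apply/orP.
have [le_Mp|lt_pM] := leP M p%:R; [left|right].
  by rewrite expr2 -mulrA (mulrCA p%:R k%:R) mulfV ?lt0r_neq0 // mulr1 ler_pM2r ?ltr0n.
rewrite mulrC ler_pM2l ?ltr0n // ler_pdivlMr ?sqrtn_gt0 //.
suff : (M * sqrtn p) ^+ 2 <= sqrtn k ^+ 2.
  by rewrite ler_sqr ?nnegrE ?mulr_ge0 ?sqrtr_ge0.
rewrite exprMn !sqr_sqrtr //; apply/ltW/(le_lt_trans _ M3_lt_k).
by rewrite [M ^+ 3]exprSr; apply: ler_wpM2l; [exact: exprn_ge0 | exact: ltW].
Qed.

End SqrtProfile.

Arguments sqrt_profile_vec {R} k.

Theorem theorem3 (R : realType) :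
  (forall (k n : nat) (v : 'I_n -> R),
      (1 <= k)%N -> unit_vec v -> sparse k v ->
      Aval k (strfun v) <= Bval k (strfun v))
  /\
  (exists (n : nat -> nat) (v : forall k : nat, 'I_(n k) -> R),
      (forall k : nat, (1 <= k)%N -> unit_vec (v k) /\ sparse k (v k)) /\
      (fun k : nat => Bval k (strfun (v k)) / Aval k (strfun (v k))) @ \oo --> +oo).
Proof.
split; first exact: Aval_le_Bval.
exists id, sqrt_profile_vec; split.
  move=> k k_gt0; split; last exact: sparse_dim.
  by rewrite /unit_vec sum_sqrt_profile_sq divff // lt0r_neq0 // sqrtn_gt0.
apply/cvgryPge => M; set M' := Num.max M 1.
have M'_ge1 : 1 <= M' by rewrite le_max lexx orbT.
exists (Num.truncn (M' ^+ 3)).+1 => // k /= lt_k.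
have k_gt0 : (0 < k)%N by apply: leq_trans lt_k.
have M'3_lt_k : M' ^+ 3 < k%:R.
  by apply: lt_le_trans (truncnS_gt _) _; rewrite ler_nat.
rewrite Aval_sqrt_profile // ler_pdivlMr ?ltr0n //.
apply: le_trans (Bval_sqrt_profile_ge k_gt0 M'_ge1 M'3_lt_k).
by rewrite ler_pM2r ?ltr0n // le_max lexx.
Qed.
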